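(* For every $k\in\mathbb{N}$ and every $a\ge\sqrt{2k+1}$, $$\int_{|x|\ge a}|\phi_k(x)|^2\,dx\le\frac{2^{k+1}}{k!\sqrt{\pi}}\,a^{2k-1}e^{-a^2}.$$
   Context: $\phi_k(x)=\frac{(-1)^k}{\sqrt{2^k k!\sqrt{\pi}}}e^{x^2/2}\frac{d^k}{dx^k}(e^{-x^2})$, $x\in\mathbb{R}$, $k\in\mathbb{N}$, are the one-dimensional Hermite functions. *)

From Stdlib Require Import Reals Arith.
Open Scope R_scope.

(* A family of iterated derivatives of x |-> exp(-x^2):
   D 0 = exp(-x^2) and D (n+1) is the derivative of D n everywhere.
   Such a family is uniquely determined (D k = d^k/dx^k e^{-x^2}). *)
Definition iter_derivs_gauss (D : nat -> R -> R) : Prop :=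
  (forall x, D 0%nat x = exp (- x ^ 2)) /\
  (forall (n : nat) (x : R), derivable_pt_lim (D n) x (D (S n) x)).

Definition hermite_fun (D : nat -> R -> R) (k : nat) (x : R) : R :=
  (-1) ^ k / sqrt (2 ^ k * INR (fact k) * sqrt PI) * exp (x ^ 2 / 2) * D k x.

(* L is the (improper) integral of f over { x : |x| >= a }, i.e.
   L = lim_{b -> +oo} ( int_{-b}^{-a} f + int_a^b f ), with f Riemann
   integrable on every bounded piece. *)
Definition tail_integral (f : R -> R) (a L : R) : Prop :=
  (forall b, a <= b ->
     inhabited (Riemann_integrable f a b) /\
     inhabited (Riemann_integrable f (- b) (- a))) /\
  (forall eps, 0 < eps -> exists B, forall b, B <= b ->
     forall (pr1 : Riemann_integrable f (- b) (- a))
            (pr2 : Riemann_integrable f a b),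
       Rabs (RiemannInt pr1 + RiemannInt pr2 - L) < eps).

(* With H_k(x) = (-1)^k e^{x^2} (d/dx)^k e^{-x^2} one has
   |phi_k|^2 = H_k^2 e^{-x^2} / (2^k k! sqrt pi).  The recurrence
   H_{n+2} = 2x H_{n+1} - 2(n+1) H_n gives, by induction while 2n <= x^2,
   x H_n <= H_{n+1} <= 2x H_n for x > 0, hence |H_k(x)| <= (2|x|)^k and
   |phi_k(x)|^2 <= 2^k/(k! sqrt pi) x^{2k} e^{-x^2}.  For x^2 >= 2k - 1 this
   is dominated by the derivative of -x^{2k-1} e^{-x^2}, so each half-line
   contributes at most 2^k/(k! sqrt pi) a^{2k-1} e^{-a^2}; the improper
   integrals exist as limits of increasing bounded functions. *)

From Stdlib Require Import Reals ZArith Lra Lia Classical.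
From Coquelicot Require Import Coquelicot.
Open Scope R_scope.

Lemma hermite_rec_invariant (s : nat -> R) (y : R) :
  0 <= y -> s 0%nat = 1 -> s 1%nat = 2 * y ->
  (forall n, s (S (S n)) = 2 * y * s (S n) - 2 * INR (S n) * s n) ->
  forall n, 2 * INR n <= y ^ 2 ->
  0 <= s n /\ y * s n <= s (S n) /\ s (S n) <= 2 * y * s n /\ s n <= (2 * y) ^ n.
Proof.
  intros Hy H0 H1 Hrec n. induction n as [|n IH]; intros Hn.
  - rewrite H0, H1; simpl; lra.
  - pose proof (pos_INR n) as Hn0. rewrite S_INR in Hn.
    destruct IH as [Hs [Hlo [Hhi Hpow]]]; [lra|].
    assert (Hy0 : 0 < y) by nra.
    assert (Hs1 : 0 <= s (S n)) by nra.
    assert (Hmid : 2 * INR (S n) * s n <= y * s (S n)).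
    { apply (Rmult_le_reg_l y); [exact Hy0|]. rewrite S_INR. nra. }
    pose proof (pos_INR (S n)).
    rewrite Hrec. repeat split.
    + exact Hs1.
    + lra.
    + nra.
    + simpl. nra.
Qed.

Lemma hermite_rec_abs_le (s : nat -> R) (x : R) :
  s 0%nat = 1 -> s 1%nat = 2 * x ->
  (forall n, s (S (S n)) = 2 * x * s (S n) - 2 * INR (S n) * s n) ->
  forall k, 2 * INR k <= x ^ 2 -> Rabs (s k) <= (2 * Rabs x) ^ k.
Proof.
  intros H0 H1 Hrec k Hk.
  destruct (Rle_or_lt 0 x) as [Hx|Hx].
  - destruct (hermite_rec_invariant s x Hx H0 H1 Hrec k Hk) as [Hs [_ [_ Hpow]]].
    rewrite !Rabs_pos_eq by assumption. exact Hpow.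
  - (* the reflection x -> -x turns s n into (-1)^n s n *)
    set (t n := (-1) ^ n * s n).
    assert (Ht : 0 <= t k /\ - x * t k <= t (S k) /\ t (S k) <= 2 * - x * t k
                 /\ t k <= (2 * - x) ^ k).
    { apply hermite_rec_invariant; unfold t; try lra.
      intros n; rewrite Hrec; simpl; ring. }
    assert (Habs : Rabs (s k) = t k).
    { rewrite <- (Rabs_pos_eq (t k)) by apply Ht.
      unfold t. rewrite Rabs_mult, pow_1_abs. ring. }
    rewrite Habs, Rabs_left by exact Hx. apply Ht.
Qed.

Definition gauss_tail (k : nat) (x : R) : R := x ^ (2 * k) * exp (- x ^ 2) / x.

Definition gauss_tail_deriv (k : nat) (x : R) : R :=
  exp (- x ^ 2) * (2 * x ^ (2 * k) - (2 * INR k - 1) * x ^ (2 * k) / x ^ 2).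

Lemma is_derive_gauss_tail k x :
  x <> 0 -> is_derive (fun y => - gauss_tail k y) x (gauss_tail_deriv k x).
Proof.
  intros Hx. unfold gauss_tail, gauss_tail_deriv.
  auto_derive; [exact Hx|].
  assert (Hpred : forall n, INR n * x ^ pred n = INR n * x ^ n / x)
    by (intros [|n]; simpl; field; exact Hx).
  replace (k + (k + 0))%nat with (2 * k)%nat by lia.
  replace (- (x * (x * 1))) with (- x ^ 2) by ring.
  rewrite Hpred, mult_INR. simpl (INR 2). field. exact Hx.
Qed.

Lemma continuous_gauss_tail_deriv k x : x <> 0 -> continuous (gauss_tail_deriv k) x.
Proof.
  intros Hx. apply (ex_derive_continuous (gauss_tail_deriv k)). unfold gauss_tail_deriv.
  auto_derive. rewrite Rmult_1_r. now apply Rmult_integral_contrapositive.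
Qed.

Lemma gauss_moment_le_tail_deriv k x :
  x <> 0 -> 2 * INR k - 1 <= x ^ 2 ->
  x ^ (2 * k) * exp (- x ^ 2) <= gauss_tail_deriv k x.
Proof.
  intros Hx Hk. unfold gauss_tail_deriv.
  assert (Hx2 : 0 < x ^ 2) by (simpl; nra).
  assert (Hm : 0 <= x ^ (2 * k)) by (rewrite pow_mult; apply pow_le; lra).
  assert (Hle : (2 * INR k - 1) * x ^ (2 * k) / x ^ 2 <= x ^ (2 * k)).
  { apply (Rmult_le_reg_r (x ^ 2)); [exact Hx2|].
    unfold Rdiv; rewrite Rmult_assoc, Rinv_l by lra. nra. }
  pose proof (exp_pos (- x ^ 2)). nra.
Qed.

Lemma gauss_tail_opp k x : gauss_tail k (- x) = - gauss_tail k x.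
Proof.
  unfold gauss_tail. rewrite !pow_mult. unfold Rdiv. rewrite Rinv_opp.
  replace ((- x) ^ 2) with (x ^ 2) by ring. ring.
Qed.

Lemma gauss_tail_nonneg k x : 0 < x -> 0 <= gauss_tail k x.
Proof.
  intros Hx. unfold gauss_tail. apply Rmult_le_pos.
  - apply Rmult_le_pos; [apply pow_le; lra | left; apply exp_pos].
  - left; apply Rinv_0_lt_compat, Hx.
Qed.

Lemma gauss_tail_powerRZ k x :
  x <> 0 -> gauss_tail k x = powerRZ x (2 * Z.of_nat k - 1) * exp (- x ^ 2).
Proof.
  intros Hx. unfold gauss_tail.
  replace (2 * Z.of_nat k - 1)%Z with (Z.of_nat (2 * k) + (-1))%Z by lia.
  rewrite powerRZ_add, <- pow_powerRZ by exact Hx. simpl (powerRZ x (-1)).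
  field. exact Hx.
Qed.

Lemma RInt_le_of_deriv (f F F' : R -> R) (l r : R) :
  l <= r -> ex_RInt f l r ->
  (forall x, l <= x <= r -> is_derive F x (F' x) /\ continuous F' x /\ f x <= F' x) ->
  RInt f l r <= F r - F l.
Proof.
  intros Hlr Hf HF.
  assert (HI : is_RInt F' l r (minus (F r) (F l))).
  { apply (is_RInt_derive (V := R_CompleteNormedModule));
      rewrite Rmin_left, Rmax_right by exact Hlr; intros x Hx; apply HF, Hx. }
  replace (F r - F l) with (RInt F' l r) by exact (is_RInt_unique _ _ _ _ HI).
  apply RInt_le; [exact Hlr | exact Hf | eexists; exact HI |].
  intros x Hx. apply HF; lra.
Qed.

Lemma RInt_subinterval_le (f : R -> R) (u v w z : R) :
  (forall x, continuous f x) -> (forall x, 0 <= f x) ->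
  u <= v -> v <= w -> w <= z -> RInt f v w <= RInt f u z.
Proof.
  intros Hc Hpos Huv Hvw Hwz.
  assert (Hint : forall p q, ex_RInt f p q)
    by (intros; apply (ex_RInt_continuous (V := R_CompleteNormedModule)); auto).
  assert (Hnn : forall p q, p <= q -> 0 <= RInt f p q)
    by (intros p q Hpq; apply RInt_ge_0; auto).
  rewrite <- (RInt_Chasles f u v z), <- (RInt_Chasles f v w z) by apply Hint.
  pose proof (Hnn u v Huv). pose proof (Hnn w z Hwz).
  unfold plus; simpl; lra.
Qed.

Lemma increasing_bounded_cvg (J : R -> R) (a M : R) :
  (forall b1 b2, a <= b1 -> b1 <= b2 -> J b1 <= J b2) ->
  (forall b, a <= b -> J b <= M) ->
  exists S, S <= M /\
    forall eps, 0 < eps -> exists B, forall b, B <= b -> Rabs (J b - S) < eps.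
Proof.
  intros Hmono Hbnd.
  set (E y := exists b, a <= b /\ y = J b).
  assert (HE : exists y, E y) by (exists (J a), a; split; [lra | reflexivity]).
  assert (HB : bound E) by (exists M; intros y [b [Hb ->]]; auto).
  destruct (completeness E HB HE) as [S [Hub Hlub]].
  exists S. split.
  - apply Hlub. intros y [b [Hb ->]]; auto.
  - intros eps Heps.
    destruct (classic (exists b, a <= b /\ S - eps < J b)) as [[b0 [Hb0 Hj]]|Hnone].
    + exists (Rmax a b0). intros b Hb.
      pose proof (Rmax_l a b0). pose proof (Rmax_r a b0).
      assert (J b <= S) by (apply Hub; exists b; split; [lra | reflexivity]).
      assert (J b0 <= J b) by (apply Hmono; lra).
      apply Rabs_def1; lra.
    + assert (S <= S - eps); [|lra].
      apply Hlub. intros y [b [Hb ->]].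
      apply Rnot_lt_le. intros Hlt. apply Hnone. exists b; auto.
Qed.

Lemma tail_integral_of_bounded (f : R -> R) (a M1 M2 : R) :
  (forall x, continuous f x) -> (forall x, 0 <= f x) ->
  (forall b, a <= b -> RInt f a b <= M1) ->
  (forall b, a <= b -> RInt f (- b) (- a) <= M2) ->
  exists L, tail_integral f a L /\ L <= M1 + M2.
Proof.
  intros Hc Hpos H1 H2.
  destruct (increasing_bounded_cvg (fun b => RInt f a b) a M1) as [S1 [HS1 HL1]];
    [intros; apply RInt_subinterval_le; auto; lra | exact H1 |].
  destruct (increasing_bounded_cvg (fun b => RInt f (- b) (- a)) a M2) as [S2 [HS2 HL2]];
    [intros; apply RInt_subinterval_le; auto; lra | exact H2 |].
  exists (S1 + S2). split; [split | lra].
  - intros b _. split; constructor; apply ex_RInt_Reals_0;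
      apply (ex_RInt_continuous (V := R_CompleteNormedModule)); auto.
  - intros eps Heps.
    destruct (HL1 (eps / 2)) as [B1 HB1]; [lra|].
    destruct (HL2 (eps / 2)) as [B2 HB2]; [lra|].
    exists (Rmax B1 B2). intros b Hb pr1 pr2.
    rewrite <- !RInt_Reals.
    pose proof (Rabs_def2 _ _ (HB1 b (Rle_trans _ _ _ (Rmax_l B1 B2) Hb))).
    pose proof (Rabs_def2 _ _ (HB2 b (Rle_trans _ _ _ (Rmax_r B1 B2) Hb))).
    apply Rabs_def1; lra.
Qed.

Definition hermite_const (k : nat) : R := 2 ^ k / (INR (fact k) * sqrt PI).

Lemma hermite_const_pos k : 0 < hermite_const k.
Proof.
  apply Rdiv_lt_0_compat; [apply pow_lt; lra|].
  apply Rmult_lt_0_compat; [apply lt_0_INR, lt_O_fact | apply sqrt_lt_R0, PI_RGT_0].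
Qed.

Section Hermite.

Variable D : nat -> R -> R.
Hypothesis HD : iter_derivs_gauss D.

Lemma gauss_iter_deriv n x (f : R -> R) (l : R) :
  (forall y, D n y = f y) -> is_derive f x l -> D (S n) x = l.
Proof.
  intros Hf Hl.
  rewrite <- (is_derive_unique f x l Hl), <- (Derive_ext (D n) f x Hf).
  symmetry. apply is_derive_unique, is_derive_Reals, (proj2 HD).
Qed.

Lemma gauss_iter_1 x : D 1%nat x = - 2 * x * exp (- x ^ 2).
Proof.
  apply (gauss_iter_deriv 0 x (fun y => exp (- y ^ 2))); [apply (proj1 HD)|].
  auto_derive; [exact I | simpl; ring].
Qed.

Lemma gauss_iter_rec n x :
  D (S (S n)) x = - 2 * x * D (S n) x - 2 * INR (S n) * D n x.
Proof.
  revert x. induction n as [|n IH]; intros x.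
  - apply (gauss_iter_deriv 1 x (fun y => - 2 * y * exp (- y ^ 2))); [apply gauss_iter_1|].
    rewrite gauss_iter_1, (proj1 HD). auto_derive; [exact I | simpl; ring].
  - apply (gauss_iter_deriv (S (S n)) x
             (fun y => - 2 * y * D (S n) y - 2 * INR (S n) * D n y)); [exact IH|].
    assert (Hd : forall m, is_derive (D m) x (D (S m) x))
      by (intros m; apply is_derive_Reals, (proj2 HD)).
    assert (Hcomb : is_derive (fun y => - 2 * y * D (S n) y - 2 * INR (S n) * D n y) x
              (- 2 * D (S n) x + - 2 * x * D (S (S n)) x - 2 * INR (S n) * D (S n) x)).
    { apply (is_derive_minus (fun y => - 2 * y * D (S n) y) (fun y => 2 * INR (S n) * D n y)).
      - apply (is_derive_mult (fun y => - 2 * y) (D (S n))); [| apply Hd | apply Rmult_comm].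
        auto_derive; [exact I | ring].
      - apply (is_derive_scal (D n)), Hd. }
    replace (- 2 * x * D (S (S n)) x - 2 * INR (S (S n)) * D (S n) x)
      with (- 2 * D (S n) x + - 2 * x * D (S (S n)) x - 2 * INR (S n) * D (S n) x)
      by (rewrite !S_INR; ring).
    exact Hcomb.
Qed.

Definition hermite_poly (n : nat) (x : R) : R := (-1) ^ n * D n x * exp (x ^ 2).

Lemma hermite_poly_0 x : hermite_poly 0 x = 1.
Proof.
  unfold hermite_poly. rewrite (proj1 HD), exp_Ropp. simpl.
  field. apply Rgt_not_eq, exp_pos.
Qed.

Lemma hermite_poly_1 x : hermite_poly 1 x = 2 * x.
Proof.
  unfold hermite_poly. rewrite gauss_iter_1, exp_Ropp. simpl.
  field. apply Rgt_not_eq, exp_pos.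
Qed.

Lemma hermite_poly_rec n x :
  hermite_poly (S (S n)) x = 2 * x * hermite_poly (S n) x - 2 * INR (S n) * hermite_poly n x.
Proof. unfold hermite_poly. rewrite gauss_iter_rec. simpl. ring. Qed.

Lemma hermite_fun_sq k x :
  Rabs (hermite_fun D k x) ^ 2
  = hermite_poly k x ^ 2 * exp (- x ^ 2) / (2 ^ k * INR (fact k) * sqrt PI).
Proof.
  unfold hermite_fun, hermite_poly.
  set (C := 2 ^ k * INR (fact k) * sqrt PI).
  assert (HC : 0 < C).
  { apply Rmult_lt_0_compat; [apply Rmult_lt_0_compat|].
    - apply pow_lt; lra.
    - apply lt_0_INR, lt_O_fact.
    - apply sqrt_lt_R0, PI_RGT_0. }
  set (e := exp (x ^ 2 / 2)).
  assert (He : 0 < e) by apply exp_pos.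
  assert (Hsq : exp (x ^ 2) = e * e) by (unfold e; rewrite <- exp_plus; f_equal; field).
  rewrite pow2_abs, exp_Ropp, Hsq.
  assert (Hs : 0 < sqrt C) by (apply sqrt_lt_R0, HC).
  rewrite <- (pow2_sqrt C) at 2 by lra.
  field. lra.
Qed.

Lemma hermite_fun_sq_le k x :
  2 * INR k <= x ^ 2 ->
  Rabs (hermite_fun D k x) ^ 2 <= hermite_const k * (x ^ (2 * k) * exp (- x ^ 2)).
Proof.
  intros Hk. rewrite hermite_fun_sq.
  assert (Hb : Rabs (hermite_poly k x) <= (2 * Rabs x) ^ k).
  { apply (hermite_rec_abs_le (fun n => hermite_poly n x)); auto.
    - apply hermite_poly_0.
    - apply hermite_poly_1.
    - intros n; apply hermite_poly_rec. }
  assert (Hpow : ((2 * Rabs x) ^ k) ^ 2 = 2 ^ k * 2 ^ k * x ^ (2 * k)).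
  { rewrite <- pow_mult, (Nat.mul_comm k 2), !pow_mult, <- Rpow_mult_distr.
    replace ((2 * Rabs x) ^ 2) with (2 * 2 * x ^ 2) by (rewrite <- (pow2_abs x); ring).
    rewrite !Rpow_mult_distr. reflexivity. }
  assert (Hsq : hermite_poly k x ^ 2 <= 2 ^ k * 2 ^ k * x ^ (2 * k)).
  { rewrite <- Hpow, <- pow2_abs. apply pow_incr. split; [apply Rabs_pos | exact Hb]. }
  assert (Hf : 0 < INR (fact k)) by apply lt_0_INR, lt_O_fact.
  assert (Hpi : 0 < sqrt PI) by apply sqrt_lt_R0, PI_RGT_0.
  assert (H2 : 0 < 2 ^ k) by (apply pow_lt; lra).
  replace (hermite_const k * (x ^ (2 * k) * exp (- x ^ 2)))
    with (2 ^ k * 2 ^ k * x ^ (2 * k) * exp (- x ^ 2) / (2 ^ k * INR (fact k) * sqrt PI))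
    by (unfold hermite_const; field; lra).
  unfold Rdiv. apply Rmult_le_compat_r.
  - left. apply Rinv_0_lt_compat. apply Rmult_lt_0_compat; [apply Rmult_lt_0_compat|]; assumption.
  - apply Rmult_le_compat_r; [left; apply exp_pos | exact Hsq].
Qed.

Lemma continuous_hermite_fun_sq k x :
  continuous (fun y => Rabs (hermite_fun D k y) ^ 2) x.
Proof.
  apply continuous_ext with (fun y => hermite_fun D k y ^ 2); [intros; symmetry; apply pow2_abs|].
  apply (ex_derive_continuous (fun y => hermite_fun D k y ^ 2)).
  unfold hermite_fun. apply ex_derive_pow, ex_derive_mult.
  - auto_derive. exact I.
  - exists (D (S k) x). apply is_derive_Reals, (proj2 HD).
Qed.

Lemma RInt_hermite_fun_sq_le k l r :
  l <= r -> (forall x, l <= x <= r -> 2 * INR k + 1 <= x ^ 2) ->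
  RInt (fun x => Rabs (hermite_fun D k x) ^ 2) l r
  <= hermite_const k * (gauss_tail k l - gauss_tail k r).
Proof.
  intros Hlr Hx.
  replace (hermite_const k * (gauss_tail k l - gauss_tail k r))
    with (hermite_const k * - gauss_tail k r - hermite_const k * - gauss_tail k l) by ring.
  apply (RInt_le_of_deriv _ (fun y => hermite_const k * - gauss_tail k y)
           (fun y => hermite_const k * gauss_tail_deriv k y)); [exact Hlr | |].
  - apply (ex_RInt_continuous (V := R_CompleteNormedModule)).
    intros; apply continuous_hermite_fun_sq.
  - intros x Hlrx. specialize (Hx x Hlrx). pose proof (pos_INR k).
    assert (Hx0 : x <> 0) by (intros ->; simpl in Hx; lra).
    split; [|split].
    + apply (is_derive_scal (fun y => - gauss_tail k y)), is_derive_gauss_tail, Hx0.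
    + apply (continuous_mult (fun _ => hermite_const k)); [apply continuous_const|].
      apply continuous_gauss_tail_deriv, Hx0.
    + eapply Rle_trans; [apply hermite_fun_sq_le; lra|].
      apply Rmult_le_compat_l; [left; apply hermite_const_pos|].
      apply gauss_moment_le_tail_deriv; [exact Hx0 | lra].
Qed.

End Hermite.

Theorem mainTheorem6 :
  forall (D : nat -> R -> R), iter_derivs_gauss D ->
  forall (k : nat) (a : R), sqrt (2 * INR k + 1) <= a ->
  exists L : R,
    tail_integral (fun x => Rabs (hermite_fun D k x) ^ 2) a L /\
    L <= 2 ^ (S k) / (INR (fact k) * sqrt PI)
         * powerRZ a (2 * Z.of_nat k - 1) * exp (- a ^ 2).
Proof.
  intros D HD k a Ha.
  pose proof (pos_INR k) as Hk.
  assert (Ha2 : 2 * INR k + 1 <= a ^ 2).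
  { rewrite <- (pow2_sqrt (2 * INR k + 1)) by lra.
    apply pow_incr. split; [apply sqrt_pos | exact Ha]. }
  assert (Ha0 : 0 < a) by (pose proof (sqrt_pos (2 * INR k + 1)); nra).
  assert (Htail : forall x, a <= Rabs x -> 2 * INR k + 1 <= x ^ 2).
  { intros x Hx. rewrite <- pow2_abs. eapply Rle_trans; [exact Ha2|].
    apply pow_incr; lra. }
  set (M := hermite_const k * gauss_tail k a).
  assert (HM : forall b, a <= b -> hermite_const k * (gauss_tail k a - gauss_tail k b) <= M).
  { intros b Hb. pose proof (hermite_const_pos k).
    pose proof (gauss_tail_nonneg k b ltac:(lra)). unfold M. nra. }
  destruct (tail_integral_of_bounded (fun x => Rabs (hermite_fun D k x) ^ 2) a M M)
    as [L [HL HLM]].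
  - intros x; apply continuous_hermite_fun_sq, HD.
  - intros x; apply pow2_ge_0.
  - intros b Hb. eapply Rle_trans; [apply RInt_hermite_fun_sq_le; auto|apply HM, Hb].
    intros x Hx; apply Htail; rewrite Rabs_pos_eq; lra.
  - intros b Hb. eapply Rle_trans; [apply RInt_hermite_fun_sq_le; auto; try lra|].
    + intros x Hx; apply Htail; rewrite Rabs_left; lra.
    + rewrite !gauss_tail_opp. replace (- gauss_tail k b - - gauss_tail k a)
        with (gauss_tail k a - gauss_tail k b) by ring. apply HM, Hb.
  - exists L. split; [exact HL|].
    rewrite Rmult_assoc, <- gauss_tail_powerRZ by lra.
    unfold M, hermite_const in HLM. simpl pow. unfold Rdiv in *. lra.
Qed.
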